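(* Let $\tau$ be an infinite cardinal and let $X$ be a space with $\chi(X)\le\tau$. (a) If $X$ is a coset space of a $\tau$-balanced group $G$ (or there is a continuous transitive $d$-open action $\alpha$ of a $\tau$-balanced group $G$ on $X$), then $X$ is a coset space of a topological group $H$ (or there is a continuous transitive $d$-open action $\gamma$ of a topological group $H$ on $X$) with $\chi(H)\le\tau$. (b) If $X$ is a coset space of a $\tau$-narrow group $G$ (or there is a continuous transitive $d$-open action $\alpha$ of a $\tau$-narrow group $G$ on $X$), then $X$ is a coset space of a topological group $H$ (or there is a continuous transitive $d$-open action $\gamma$ of a topological group $H$ on $X$) with $w(H)\le\tau$, and hence $w(X)\le\tau$. Moreover, in each case there is an equivariant pair of maps $(\varphi,\mathrm{id}):(G,X,\alpha)\to(H,X,\gamma)$ with $\varphi$ an epimorphism (in the coset space case $\alpha,\gamma$ are the natural actions by left translations).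
   Context: All spaces are Tychonoff. $X$ is a coset space of a topological group $G$ if $X$ is homeomorphic to the left coset space $G/K$ (quotient topology) of some closed subgroup $K$; $G$ then acts on $X$ by left translations. An action $\alpha$ of $G$ on $X$ is $d$-open if $x\in\operatorname{Int}(\operatorname{cl}(Ox))$ for every $x\in X$ and every neighborhood $O$ of the unit. An equivariant pair $(\varphi,\mathrm{id}):(G,X,\alpha)\to(H,X,\gamma)$ is a continuous homomorphism $\varphi$ with $\alpha(g,x)=\gamma(\varphi(g),x)$. $G$ is $\tau$-narrow if for every neighborhood $U$ of the unit there is $A\subset G$, $|A|\le\tau$, with $AU=G$; $\tau$-balanced if for every neighborhood $U$ of the unit there is a family $\gamma$ of at most $\tau$ neighborhoods of the unit such that each $x\in G$ has some $V\in\gamma$ with $xVx^{-1}\subset U$. *)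

From HB Require Import structures.
From mathcomp Require Import all_boot all_order all_algebra.
From mathcomp Require Import all_classical all_reals all_analysis.
From mathcomp Require Import Rstruct Rstruct_topology.
Set Implicit Arguments. Unset Strict Implicit. Unset Printing Implicit Defensive.
Local Open Scope classical_set_scope.

(* A cardinal tau is represented by a type K, tau = |K|; "|A| <= tau" is
   A #<= [set: K] (existence of an injection A -> K). *)
Definition card_le_tau (K : Type) (T : Type) (A : set T) : Prop :=
  card_le A [set: K].

Definition tychonoff_space (X : topologicalType) : Prop :=
  (forall x : X, closed [set x]) /\
  forall (A : set X) (x : X), closed A -> ~ A x ->
    exists f : X -> Rdefinitions.R,
      continuous f /\ f x = 0%R /\ (forall y, A y -> f y = 1%R).

(* Topological groups (Hausdorff, hence Tychonoff). *)
Record topGroup := TopGroup {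
  tg_sort :> topologicalType;
  tg_mul : tg_sort -> tg_sort -> tg_sort;
  tg_inv : tg_sort -> tg_sort;
  tg_one : tg_sort;
  tg_mulA : forall x y z, tg_mul x (tg_mul y z) = tg_mul (tg_mul x y) z;
  tg_mul1g : forall x, tg_mul tg_one x = x;
  tg_mulVg : forall x, tg_mul (tg_inv x) x = tg_one;
  tg_mul_cont : continuous (fun p : tg_sort * tg_sort => tg_mul p.1 p.2);
  tg_inv_cont : continuous tg_inv;
  tg_hausdorff : hausdorff_space tg_sort }.

Arguments tg_mul {t}.
Arguments tg_inv {t}.
Arguments tg_one {t}.

Definition character_le (K : Type) (X : topologicalType) : Prop :=
  forall x : X, exists B : set (set X), card_le_tau K B /\
    (forall V, B V -> nbhs x V) /\
    (forall U, nbhs x U -> exists2 V, B V & V `<=` U).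

Definition weight_le (K : Type) (X : topologicalType) : Prop :=
  exists B : set (set X), card_le_tau K B /\
    (forall V, B V -> open V) /\
    (forall (U : set X) (x : X), open U -> U x -> exists2 V, B V & V x /\ V `<=` U).

Definition tau_narrow (K : Type) (G : topGroup) : Prop :=
  forall U : set G, nbhs tg_one U ->
    exists A : set G, card_le_tau K A /\
      forall g : G, exists a u, A a /\ U u /\ g = tg_mul a u.

Definition tau_balanced (K : Type) (G : topGroup) : Prop :=
  forall U : set G, nbhs tg_one U ->
    exists gam : set (set G), card_le_tau K gam /\
      (forall V, gam V -> nbhs tg_one V) /\
      forall x : G, exists2 V, gam V &
        forall v, V v -> U (tg_mul (tg_mul x v) (tg_inv x)).

Definition subgroup (G : topGroup) (S : set G) : Prop :=
  S tg_one /\ forall x y, S x -> S y -> S (tg_mul x (tg_inv y)).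

(* X is a coset space of G via pi : pi identifies X with the left coset
   space G/S of a closed subgroup S (pi g = pi h iff g^-1 h in S), and the
   topology of X is the quotient topology. *)
Definition coset_space_via (G : topGroup) (X : topologicalType) (pi : G -> X) : Prop :=
  exists S : set G, subgroup S /\ closed S /\
    (forall y : X, exists g, pi g = y) /\
    (forall g h : G, pi g = pi h <-> S (tg_mul (tg_inv g) h)) /\
    (forall U : set X, open U <-> open (pi @^-1` U)).

Definition cont_action (G : topGroup) (X : topologicalType) (a : G -> X -> X) : Prop :=
  (forall x, a tg_one x = x) /\
  (forall g h x, a (tg_mul g h) x = a g (a h x)) /\
  continuous (fun p : G * X => a p.1 p.2).

Definition transitive_action (G : topGroup) (X : Type) (a : G -> X -> X) : Prop :=
  forall x y : X, exists g, a g x = y.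

Definition d_open_action (G : topGroup) (X : topologicalType) (a : G -> X -> X) : Prop :=
  forall (x : X) (O : set G), nbhs tg_one O ->
    interior (closure ((fun g => a g x) @` O)) x.

Definition epimorphism (G H : topGroup) (phi : G -> H) : Prop :=
  (forall g h, phi (tg_mul g h) = tg_mul (phi g) (phi h)) /\
  continuous phi /\ (forall k : H, exists g, phi g = k).

(* Let N be the kernel of the action of G on X; G/N acts on X, and G/N is
   realised as the group of maps [alpha g].  When G is tau-balanced, the
   operations "take a half", "invert", "intersect" and "conjugate by some
   element" (the last one indexed by a set of size tau, by balancedness)
   close any family of tau neighbourhoods of the unit into a family gamma of
   size tau, because |tau x tau| = tau (Hessenberg's theorem, a consequence
   of Zorn's lemma).  Seeding gamma with neighbourhoods U_k such that
   U_k . O_k lies in the k-th member of a local base of X, gamma becomes a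
   base at the unit of a group topology on G/N for which the action is
   still continuous; G/N is Hausdorff because X is, and has character at
   most tau.  For (b), tau-narrow groups are tau-balanced, narrowness passes
   to the image G/N, a tau-narrow group of character <= tau has weight
   <= tau, and d-openness carries a base of G/N to a base of the regular
   space X.  Coset spaces are reduced to their action by left translations. *)

From HB Require Import structures.
From mathcomp Require Import all_boot all_order all_algebra.
From mathcomp Require Import all_classical all_reals all_analysis.
From mathcomp Require Import Rstruct Rstruct_topology lra.
Set Implicit Arguments. Unset Strict Implicit. Unset Printing Implicit Defensive.
Local Open Scope classical_set_scope.
Local Open Scope card_scope.

(** * Cardinal arithmetic *)

Lemma chain_bigcup2 T (F : set (set T)) x y : total_on F subset ->
  (\bigcup_(A in F) A) x -> (\bigcup_(A in F) A) y ->
  exists2 A, F A & A x /\ A y.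
Proof.
move=> Ftot [A FA Ax] [B FB By].
have [AB|BA] := Ftot _ _ FA FB; first by exists B => //; split => //; exact: AB.
by exists A => //; split => //; exact: BA.
Qed.

Lemma Zorn_bigcup_above T (P : set (set T)) (A0 : set T) : P A0 ->
  (forall F, F !=set0 -> F `<=` P -> total_on F subset ->
     P (\bigcup_(A in F) A)) ->
  exists A, [/\ P A, A0 `<=` A & forall B, A `<` B -> ~ P B].
Proof.
move=> PA0 Pchain.
(* Allowing [set0] provides an upper bound for the empty chain. *)
pose Q A := A = set0 \/ P A /\ A0 `<=` A.
have [A [QA Amax]] : exists A, Q A /\ forall B, A `<` B -> ~ Q B.
  apply: Zorn_bigcup => F FQ Ftot.
  pose F' := F `&` [set A | A !=set0].
  have FF' : \bigcup_(A in F) A = \bigcup_(A in F') A.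
    apply/seteqP; split=> x [A FA Ax]; last by exists A => //; case: FA.
    by exists A => //; split => //; exists x.
  have F'P A : F' A -> P A /\ A0 `<=` A.
    by move=> [/FQ [->|//] /set0P]; rewrite eqxx.
  have [[A1 F'A1]|F'0] := pselect (F' !=set0); last first.
    left; rewrite FF'; apply/seteqP; split => // x [A F'A _].
    by apply: F'0; exists A.
  right; rewrite FF'; split.
    apply: Pchain => [|A /F'P []//|A B [FA _] [FB _]]; first by exists A1.
    exact: Ftot.
  by move=> x /(F'P _ F'A1).2 A1x; exists A1.
case: QA => [A0E|[PA A0A]]; last first.
  exists A; split => // B AB PB; apply: (Amax B AB).
  by right; split => //; apply: subset_trans A0A (properW AB).
have [A00|/set0P[x A0x]] := eqVneq A0 set0.
  exists A0; split => // B AB PB; apply: (Amax B); first by rewrite A0E -A00.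
  by right; split => //; exact: properW.
exfalso; apply: (Amax A0); last by right; split.
by rewrite A0E; split => // /(_ x A0x).
Qed.

Definition partial_bij T U (G : set (T * U)) :=
  (forall x y y', G (x, y) -> G (x, y') -> y = y') /\
  (forall x x' y, G (x, y) -> G (x', y) -> x = x').

Lemma partial_bij_bigcup T U (F : set (set (T * U))) :
  F `<=` @partial_bij T U -> total_on F subset ->
  partial_bij (\bigcup_(G in F) G).
Proof.
move=> FP Ftot; split=> [x y y'|x x' y] h h'.
  by have [G /FP [Gf _] [Gy Gy']] := chain_bigcup2 Ftot h h'; exact: Gf Gy Gy'.
by have [G /FP [_ Gi] [Gx Gx']] := chain_bigcup2 Ftot h h'; exact: Gi Gx Gx'.
Qed.

Lemma partial_bij_card_eq T U (G : set (T * U)) :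
  partial_bij G -> fst @` G #= snd @` G.
Proof.
move=> [Gf Gi].
have fst_inj : {in G &, injective fst}.
  move=> [x y] [x' y'] /set_mem Gxy /set_mem + /= xx'.
  by rewrite -xx' => /(Gf _ _ _ Gxy) ->.
have snd_inj : {in G &, injective snd}.
  move=> [x y] [x' y'] /set_mem Gxy /set_mem + /= yy'.
  by rewrite -yy' => /(Gi _ _ _ Gxy) ->.
exact: card_eq_trans (inj_card_eq fst_inj) (card_esym (inj_card_eq snd_inj)).
Qed.

Lemma card_le_total T U (A : set T) (B : set U) : A #<= B \/ B #<= A.
Proof.
pose P G := G `<=` A `*` B /\ partial_bij G.
have [G [[GAB GP] Gmax]] : exists G, P G /\ forall G', G `<` G' -> ~ P G'.
  apply: Zorn_bigcup => F FP Ftot; split.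
    by move=> p [G /FP [+ _] Gp]; apply.
  by apply: partial_bij_bigcup Ftot => G /FP [].
have /card_eqPle [GAB' GBA'] := partial_bij_card_eq GP.
have [AG|/nonsubset [a [Aa aG]]] := pselect (A `<=` fst @` G).
  left; apply: card_le_trans (subset_card_le AG) (card_le_trans GAB' _).
  by apply: subset_card_le => _ [p /GAB [_ Bp] <-].
have [BG|/nonsubset [b [Bb bG]]] := pselect (B `<=` snd @` G).
  right; apply: card_le_trans (subset_card_le BG) (card_le_trans GBA' _).
  by apply: subset_card_le => _ [p /GAB [Ap _] <-].
exfalso; apply: (Gmax (G `|` [set (a, b)])).
  split; first by move=> p Gp; left.
  by move=> /(_ (a, b) (or_intror erefl)) Gab; apply: aG; exists (a, b).
split; first by move=> p [/GAB //|->].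
have aG' y : ~ G (a, y) by move=> Gay; apply: aG; exists (a, y).
have bG' x : ~ G (x, b) by move=> Gxb; apply: bG; exists (x, b).
have [Gf Gi] := GP.
split=> [x y y'|x x' y] [h|[? ?]] [h'|[? ?]]; subst => //;
  by [exact: Gf h h' | exact: Gi h h' | case: (aG' _ h) | case: (aG' _ h')
     | case: (bG' _ h) | case: (bG' _ h')].
Qed.

Lemma card_le_inj T U (A : set T) (B : set U) (u0 : U) : A #<= B ->
  exists f : T -> U, {in A &, injective f} /\ forall x, A x -> B (f x).
Proof.
move=> /card_leP /injfunPex [f _ finj].
exists (fun x => if pselect (A x) is left Ax then val (f (SigSub (mem_set Ax)))
  else u0).
split=> [x y /set_mem Ax /set_mem Ay|x Ax]; case: pselect => // Ax'; last first.
  exact: set_mem (valP _).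
case: pselect => // Ay' /val_inj /finj.
by move=> /(_ (mem_set I) (mem_set I)) [].
Qed.

Lemma inj_card_leT T U (A : set T) (f : T -> U) :
  {in A &, injective f} -> A #<= [set: U].
Proof. by move=> finj; rewrite -(card_le_eql (inj_card_eq finj)); exact: card_leT. Qed.

Lemma card_le_range T U (A : set T) (s : U -> T) :
  A `<=` range s -> A #<= [set: U].
Proof. by move=> As; apply: card_le_trans (subset_card_le As) (card_image_le _ _). Qed.

Lemma card_le_enum T U (A : set T) : A !=set0 -> A #<= [set: U] ->
  exists s : U -> T, A = range s.
Proof.
move=> A0 /pfcard_geP [A00|/surjfunPex //].
by move: A0; rewrite A00 => -[].
Qed.

Section Hessenberg.
Variable K : Type.

Definition sq_graph (D : set K) (f : K * K -> K) : set (K * K * K) :=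
  [set q | (D `*` D) q.1 /\ q.2 = f q.1].

Definition pairing_on (D : set K) (f : K * K -> K) :=
  {in D `*` D &, injective f} /\ forall p, (D `*` D) p -> D (f p).

Definition squaring (G : set (K * K * K)) :=
  exists D f, pairing_on D f /\ G = sq_graph D f.

Lemma sq_graph_subset D f D' f' :
  sq_graph D f `<=` sq_graph D' f' -> D `<=` D'.
Proof.
by move=> DD' a Da; have /DD' [[]] : sq_graph D f ((a, a), f (a, a)) by [].
Qed.

Lemma squaring_partial_bij G : squaring G -> partial_bij G.
Proof.
move=> [D [f [[finj _] ->]]].
split=> [p c c' [_ /= ->] [_ /= ->] //|p p' c [Dp /= ->] [Dp' /= e]].
by apply: finj; rewrite ?inE.
Qed.

Lemma squaring_bigcup (F : set (set (K * K * K))) :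
  F `<=` squaring -> total_on F subset -> squaring (\bigcup_(G in F) G).
Proof.
move=> FP Ftot; set U := \bigcup_(G in F) G.
have [Uf Ui] : partial_bij U.
  by apply: partial_bij_bigcup Ftot => G /FP /squaring_partial_bij.
pose D := [set a | exists c, U ((a, a), c)].
have /choice [f Uf'] p : exists c', forall c, U (p, c) -> U (p, c').
  have [[c Upc]|nU] := pselect (exists c, U (p, c)); first by exists c.
  by exists p.1 => c Upc; case: nU; exists c.
have Udom p c : U (p, c) -> (D `*` D) p /\ D c.
  case=> G /[dup] FG /FP [DG [fG [[_ fGD] GE]]]; rewrite GE => -[DGp /= ->].
  have GD a : DG a -> D a.
    by move=> DGa; exists (fG (a, a)), G => //; rewrite GE.
  by split; [split; apply: GD; case: DGp|apply/GD/fGD].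
have Utot p : (D `*` D) p -> U (p, f p).
  case: p => a b [[ca Uaa] [cb Ubb]].
  have [G /[dup] FG /FP [DG [fG [_ GE]]]] := chain_bigcup2 Ftot Uaa Ubb.
  rewrite GE => -[[[DGa _] _] [[_ DGb] _]].
  by apply: (Uf' _ (fG (a, b))); exists G => //; rewrite GE.
exists D, f; split; [split|].
- move=> p p' /set_mem Dp /set_mem Dp' fpp'.
  by apply: (Ui _ _ (f p) (Utot _ Dp)); rewrite fpp'; exact: Utot.
- by move=> p /Utot /Udom [].
apply/seteqP; split=> [[p c] Upc|[p c] [/= Dp ->]]; last exact: Utot.
by have [Dp _] := Udom _ _ Upc; split => //=; exact: Uf Upc (Uf' _ _ Upc).
Qed.

Lemma pairing_on_range (io : nat -> K) : injective io ->
  exists f, pairing_on (range io) f.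
Proof.
move=> io_inj; pose ioinv := pinv_ (fun=> 0%N) [set: nat] io.
have ioK a : range io a -> io (ioinv a) = a by move=> Ra; rewrite pinvK // inE.
exists (fun p => io (pickle (ioinv p.1, ioinv p.2))).
split=> [|p _]; last by exists (pickle (ioinv p.1, ioinv p.2)).
move=> [a b] [a' b'] /set_mem [/= Ra Rb] /set_mem [/= Ra' Rb'].
move=> /io_inj /(pcan_inj (@pickleK _)) [ea eb].
by rewrite -(ioK a) // -(ioK b) // ea eb !ioK.
Qed.

Section Absorb.
Variables (D : set K) (f : K * K -> K) (d0 d1 : K).
Hypotheses (fD : pairing_on D f) (Dd0 : D d0) (Dd1 : D d1) (d01 : d0 <> d1).

Definition absorb (r : K -> K) (x : K) : K :=
  if pselect (D x) then f (x, d0) else f (r x, d1).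

Lemma absorb_into r (A : set K) : (forall x, A x -> D (r x)) ->
  forall x, (D `|` A) x -> D (absorb r x).
Proof.
move=> rD x Ax; rewrite /absorb; case: pselect => Dx; apply: fD.2; split => //=.
by apply: rD; case: Ax.
Qed.

Lemma absorb_inj r (A : set K) : {in A &, injective r} ->
  (forall x, A x -> D (r x)) -> {in D `|` A &, injective (absorb r)}.
Proof.
move=> rinj rD x y /set_mem DAx /set_mem DAy; rewrite /absorb.
have DA z : (D `|` A) z -> ~ D z -> A z by case.
have fi p q : f p = f q -> (D `*` D) p -> (D `*` D) q -> p = q.
  by move=> fpq Dp Dq; apply: fD.1; rewrite ?inE.
case: pselect => Dx; case: pselect => Dy.
- by move=> /fi /(_ (conj Dx Dd0) (conj Dy Dd0)) [].
- by move=> /fi /(_ (conj Dx Dd0) (conj (rD _ (DA _ DAy Dy)) Dd1)) [_].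
- by move=> /fi /(_ (conj (rD _ (DA _ DAx Dx)) Dd1) (conj Dy Dd0)) [_ /esym].
move=> /fi /(_ (conj (rD _ (DA _ DAx Dx)) Dd1) (conj (rD _ (DA _ DAy Dy)) Dd1)) [].
by apply: rinj; rewrite inE; exact: DA.
Qed.

Lemma pairing_extend (j : K -> K) : {in D &, injective j} ->
  (forall x, D x -> ~ D (j x)) ->
  exists f', pairing_on (D `|` j @` D) f' /\
    sq_graph D f `<=` sq_graph (D `|` j @` D) f'.
Proof.
move=> jinj jD; set E := j @` D.
pose r := pinv_ (fun=> d0) D j.
have rj x : D x -> r (j x) = x by move=> Dx; rewrite /r pinvKV // inE.
have rinj : {in E &, injective r}.
  by move=> _ _ /set_mem [x Dx <-] /set_mem [y Dy <-]; rewrite !rj // => ->.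
have rD x : E x -> D (r x) by move=> [y Dy <-]; rewrite rj.
set c := absorb r; have cinj := absorb_inj rinj rD; have cD := absorb_into rD.
have cpD p : ((D `|` E) `*` (D `|` E)) p -> (D `*` D) (c p.1, c p.2).
  by move=> [? ?]; split; apply: cD.
pose f' p := if pselect ((D `*` D) p) then f p else j (f (c p.1, c p.2)).
exists f'; split; last first.
  move=> [p z] [Dp /= ->]; split; first by case: Dp; split; left.
  by rewrite /f'; case: pselect.
have jfD p : ((D `|` E) `*` (D `|` E)) p -> D (f (c p.1, c p.2)).
  by move=> /cpD; exact: fD.2.
split=> [p q /set_mem DEp /set_mem DEq|p DEp]; rewrite /f'; last first.
  case: pselect => Dp; first by left; exact: fD.2.
  by right; exists (f (c p.1, c p.2)) => //; exact: jfD.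
case: pselect => Dp; case: pselect => Dq /=.
- by apply: fD.1; rewrite inE.
- by move=> e; case: (jD _ (jfD _ DEq)); rewrite -e; exact: fD.2.
- by move=> e; case: (jD _ (jfD _ DEp)); rewrite e; exact: fD.2.
move=> /jinj; rewrite !inE => /(_ (jfD _ DEp) (jfD _ DEq)) /fD.1.
rewrite !inE => /(_ (cpD _ DEp) (cpD _ DEq)) [].
case: p q DEp DEq {Dp Dq} => [a b] [a' b'] DEp DEq.
by move=> /(cinj _ _ (mem_set DEp.1) (mem_set DEq.1)) /= ->
  /(cinj _ _ (mem_set DEp.2) (mem_set DEq.2)) /= ->.
Qed.

Lemma pairing_card_le (r : K -> K) : {in ~` D &, injective r} ->
  (forall x, (~` D) x -> D (r x)) -> [set: K * K] #<= [set: K].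
Proof.
move=> rinj rD.
have DnD x : (D `|` ~` D) x by have [Dx|nDx] := pselect (D x); [left|right].
have cD x : D (absorb r x) by exact: absorb_into rD _ (DnD x).
have cinj : injective (absorb r).
  by move=> x y; apply: (absorb_inj rinj rD); rewrite inE.
apply: (@inj_card_leT _ _ _ (fun p => f (absorb r p.1, absorb r p.2))).
move=> [a b] [a' b'] _ _ /fD.1; rewrite !inE => /(_ (conj (cD a) (cD b))).
by move=> /(_ (conj (cD a') (cD b'))) [/cinj -> /cinj ->].
Qed.

End Absorb.

(* Hessenberg: let f be a maximal pairing on D, extending one on a copy of
   nat.  An injection j : D -> ~` D would let f extend to D `|` j @` D, so
   by comparability ~` D injects into D, and then absorb embeds K into D. *)
Lemma card_le_prod_self : infinite_set [set: K] -> [set: K * K] #<= [set: K].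
Proof.
move=> Kinf; have [k0 _] := infinite_setN0 Kinf.
have [io [io_inj _]] := card_le_inj k0 ((infiniteP _).1 Kinf).
have {}io_inj : injective io by move=> m n; apply: io_inj; rewrite inE.
have [f0 f0P] := pairing_on_range io_inj.
have [_ [[D [f [fP ->]]] G0G Gmax]] := Zorn_bigcup_above
  (ex_intro _ _ (ex_intro _ f0 (conj f0P erefl)))
  (fun F _ => @squaring_bigcup F).
have [Dd0 Dd1] : D (io 0%N) /\ D (io 1%N).
  by split; apply: (sq_graph_subset G0G); eexists.
have d01 : io 0%N <> io 1%N by move=> /io_inj.
have [/(card_le_inj k0) [r [rinj rD]]|/(card_le_inj k0) [j [jinj jD]]] :=
  card_le_total (~` D) D; first exact (pairing_card_le fP Dd0 Dd1 d01 rinj rD).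
have [f' [f'P Gf']] := pairing_extend fP Dd0 Dd1 d01 jinj jD.
exfalso; apply: (Gmax _ _ (ex_intro _ _ (ex_intro _ f' (conj f'P erefl)))).
set d := io 0%N; split=> // /(_ ((j d, j d), f' (j d, j d))) h.
have jE : (D `|` j @` D) (j d) by right; exists d.
by have [[Dj _] _] := h (conj (conj jE jE) erefl); exact: jD Dd0 Dj.
Qed.

End Hessenberg.

Section InfiniteIndex.
Variable K : Type.
Hypothesis K_infinite : infinite_set [set: K].

Lemma card_le_prodK T U : [set: T] #<= [set: K] -> [set: U] #<= [set: K] ->
  [set: T * U] #<= [set: K].
Proof.
have [k0 _] := infinite_setN0 K_infinite.
move=> /(card_le_inj k0) [iT [iT_inj _]] /(card_le_inj k0) [iU [iU_inj _]].
apply: card_le_trans (card_le_prod_self K_infinite).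
apply: (@inj_card_leT _ _ _ (fun p => (iT p.1, iU p.2))).
move=> [a b] [a' b'] _ _ [/iT_inj + /iU_inj]; rewrite !inE => /(_ I I) -> /(_ I I) ->.
by [].
Qed.

Lemma card_le_countK (T : countType) : [set: T] #<= [set: K].
Proof. exact: card_le_trans (countableP _) ((infiniteP _).1 K_infinite). Qed.

Lemma surj_of_card_le T (t0 : T) : [set: T] #<= [set: K] ->
  exists p : K -> T, forall t, exists k, p k = t.
Proof.
move=> /(card_le_enum (ex_intro _ t0 I)) [p pE].
exists p => t; have [k _ <-] : range p t by rewrite -pE.
by exists k.
Qed.

Lemma closure_indexed T (b : K -> T) (op : T -> T -> K -> T) :
  exists s : K -> T, [/\ range b `<=` range s,
    forall V1 V2 k, range s V1 -> range s V2 -> range s (op V1 V2 k) &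
    forall P : set T, range b `<=` P ->
      (forall V1 V2 k, P V1 -> P V2 -> P (op V1 V2 k)) -> range s `<=` P].
Proof.
have [k0 _] := infinite_setN0 K_infinite.
have [p p_surj] := surj_of_card_le (true, (k0, k0, k0))
    (card_le_prodK (card_le_countK _)
    (card_le_prodK (card_le_prodK (card_lexx _) (card_lexx _)) (card_lexx _))).
(* Level m.+1 copies level m when [keep] holds, so the levels increase. *)
pose lev := fix lev n := if n is m.+1 then fun k =>
    let: (keep, (k1, k2, k3)) := p k in
    if keep then lev m k1 else op (lev m k1) (lev m k2) k3
  else b.
have lev_op n k1 k2 k3 : range (lev n.+1) (op (lev n k1) (lev n k2) k3).
  by have [k pk] := p_surj (false, (k1, k2, k3)); exists k => //=; rewrite pk.
have lev_mono m n : (m <= n)%N -> range (lev m) `<=` range (lev n).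
  elim: n => [|n IHn]; first by rewrite leqn0 => /eqP ->.
  rewrite leq_eqVlt ltnS => /orP [/eqP -> //|/IHn mn V /mn [k1 _ <-]].
  by have [k pk] := p_surj (true, (k1, k1, k1)); exists k => //=; rewrite pk.
have [q q_surj] := surj_of_card_le (0%N, k0)
  (card_le_prodK (card_le_countK _) (card_lexx _)).
pose s k := lev (q k).1 (q k).2.
have sP V : range s V <-> exists n, range (lev n) V.
  split=> [[k _ <-]|[n [k _ <-]]]; first by exists (q k).1, (q k).2.
  by have [k' qk'] := q_surj (n, k); exists k' => //; rewrite /s qk'.
exists s; split.
- by move=> V [k _ <-]; apply/sP; exists 0%N, k.
- move=> V1 V2 k /sP [n1 V1n1] /sP [n2 V2n2]; apply/sP; exists (maxn n1 n2).+1.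
  have [k1 _ <-] := lev_mono _ _ (leq_maxl n1 n2) _ V1n1.
  have [k2 _ <-] := lev_mono _ _ (leq_maxr n1 n2) _ V2n2.
  exact: lev_op.
- move=> P bP opP V /sP [n]; elim: n V => [|n IHn] V [k _ <-]; first exact: bP.
  rewrite /=; case: (p k) => keep [[k1 k2] k3].
  case: keep; first by apply: IHn; exists k1.
  by apply: opP; apply: IHn; [exists k1|exists k2].
Qed.

End InfiniteIndex.

(** * Topological groups and their actions *)

Section TopGroupTheory.
Variable G : topGroup.
Local Notation "x * y" := (tg_mul x y).
Local Notation "x ^-1" := (tg_inv x).
Local Notation "1" := (@tg_one G).
Implicit Types x y z : G.

Lemma tg_mulKg x y : x^-1 * (x * y) = y.
Proof. by rewrite tg_mulA tg_mulVg tg_mul1g. Qed.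

Lemma tg_mulgV x : x * x^-1 = 1.
Proof.
by rewrite -[LHS]tg_mul1g -{1}(tg_mulVg (x^-1)) -tg_mulA (tg_mulKg x) tg_mulVg.
Qed.

Lemma tg_mulg1 x : x * 1 = x.
Proof. by rewrite -(tg_mulVg x) tg_mulA tg_mulgV tg_mul1g. Qed.

Lemma tg_mulVKg x y : x * (x^-1 * y) = y.
Proof. by rewrite tg_mulA tg_mulgV tg_mul1g. Qed.

Lemma tg_mulgK x y : x * y * y^-1 = x.
Proof. by rewrite -tg_mulA tg_mulgV tg_mulg1. Qed.

Lemma tg_mulgVK x y : x * y^-1 * y = x.
Proof. by rewrite -tg_mulA tg_mulVg tg_mulg1. Qed.

Lemma tg_mulIg x : injective (tg_mul x).
Proof. by move=> y z e; rewrite -(tg_mulKg x y) e tg_mulKg. Qed.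

Lemma tg_invgK x : (x^-1)^-1 = x.
Proof. by rewrite -[LHS]tg_mulg1 -(tg_mulVg x) tg_mulA tg_mulVg tg_mul1g. Qed.

Lemma tg_invMg x y : (x * y)^-1 = y^-1 * x^-1.
Proof.
have e : x * y * (y^-1 * x^-1) = 1 by rewrite -tg_mulA tg_mulVKg tg_mulgV.
by rewrite -[LHS]tg_mulg1 -e tg_mulKg.
Qed.

Lemma tg_invg1 : 1^-1 = 1.
Proof. by rewrite -[_^-1]tg_mul1g tg_mulgV. Qed.

Lemma nbhs_mul x y (W : set G) : nbhs (x * y) W ->
  exists2 U, nbhs x U & exists2 V, nbhs y V &
    forall a b, U a -> V b -> W (a * b).
Proof.
move=> /(@tg_mul_cont G (x, y)) [[U V] /= [xU yV] UVW].
by exists U => //; exists V => // a b Ua Vb; exact: (UVW (a, b)).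
Qed.

Lemma nbhs_inv x (W : set G) : nbhs x^-1 W -> nbhs x [set a | W a^-1].
Proof. exact: (@tg_inv_cont G x W). Qed.

Lemma nbhs_lmul x y (W : set G) : nbhs (x * y) W -> nbhs y [set b | W (x * b)].
Proof.
move=> /nbhs_mul [U xU [V yV UVW]]; apply: filterS yV => b Vb.
exact: UVW (nbhs_singleton xU) Vb.
Qed.

Lemma nbhs_rmul x y (W : set G) : nbhs (x * y) W -> nbhs x [set a | W (a * y)].
Proof.
move=> /nbhs_mul [U xU [V yV UVW]]; apply: filterS xU => a Ua.
exact: UVW Ua (nbhs_singleton yV).
Qed.

Lemma nbhs1_half (V : set G) : nbhs 1 V ->
  exists2 W, nbhs 1 W & forall a b, W a -> W b -> V (a * b).
Proof.
rewrite -[X in nbhs X V]tg_mul1g => /nbhs_mul [U U1 [U' U'1 UU'V]].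
by exists (U `&` U'); [exact: filterI|move=> a b [Ua _] [_ U'b]; exact: UU'V].
Qed.

Lemma nbhs1_inv (V : set G) : nbhs 1 V -> nbhs 1 [set a | V a^-1].
Proof. by move=> V1; apply: nbhs_inv; rewrite tg_invg1. Qed.

Lemma nbhs1_ltrans x (V : set G) : nbhs 1 V -> nbhs x [set a | V (x^-1 * a)].
Proof. by move=> V1; apply: nbhs_lmul; rewrite tg_mulVg. Qed.

Lemma open_ltrans x (O : set G) : open O -> open [set z | O (x^-1 * z)].
Proof.
rewrite !openE => oO z /= Oz; apply: (@nbhs_lmul x^-1 z O).
exact: oO.
Qed.

Lemma open_rtrans x (O : set G) : open O -> open [set z | O (z * x)].
Proof. by rewrite !openE => oO z /= Oz; apply: nbhs_rmul; exact: oO. Qed.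

End TopGroupTheory.

Section ActionTheory.
Variables (G : topGroup) (X : topologicalType) (alpha : G -> X -> X).
Hypothesis act : cont_action alpha.

Lemma act1 x : alpha tg_one x = x. Proof. by case: act. Qed.

Lemma actM g h x : alpha (tg_mul g h) x = alpha g (alpha h x).
Proof. by case: act => _ []. Qed.

Lemma actK g x : alpha (tg_inv g) (alpha g x) = x.
Proof. by rewrite -actM tg_mulVg act1. Qed.

Lemma actVK g x : alpha g (alpha (tg_inv g) x) = x.
Proof. by rewrite -actM tg_mulgV act1. Qed.

Lemma nbhs_act g x (W : set X) : nbhs (alpha g x) W ->
  exists2 U, nbhs g U & exists2 B, nbhs x B &
    forall h y, U h -> B y -> W (alpha h y).
Proof.
move=> gxW; case: act => _ [_ act_cont].
have [[U B] /= [gU xB] UBW] := act_cont (g, x) W gxW.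
by exists U => //; exists B => // h y Uh By; exact: (UBW (h, y)).
Qed.

Lemma nbhs_act_pt g x (W : set X) :
  nbhs (alpha g x) W -> nbhs x [set y | W (alpha g y)].
Proof.
move=> /nbhs_act [U gU [B xB UBW]]; apply: filterS xB => y By.
exact: UBW (nbhs_singleton gU) By.
Qed.

Lemma nbhs_act_orbit g x (W : set X) :
  nbhs (alpha g x) W -> nbhs g [set h | W (alpha h x)].
Proof.
move=> /nbhs_act [U gU [B xB UBW]]; apply: filterS gU => h Uh.
exact: UBW Uh (nbhs_singleton xB).
Qed.

Lemma orbit_cont x : continuous (fun g => alpha g x).
Proof. by move=> g W; exact: nbhs_act_orbit. Qed.

End ActionTheory.

(** * The quotient of a group by the kernel of its action *)

Record group_nbhs_base (G : topGroup) (gam : set (set G)) : Prop := {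
  base_nonempty : gam !=set0;
  base_nbhs : gam `<=` nbhs tg_one;
  base_meet : forall V1 V2, gam V1 -> gam V2 ->
    exists2 W, gam W & W `<=` V1 `&` V2;
  base_half : forall V, gam V ->
    exists2 W, gam W & forall a b, W a -> W b -> V (tg_mul a b);
  base_inv : forall V, gam V -> exists2 W, gam W & forall a, W a -> V (tg_inv a);
  base_conj : forall V x, gam V ->
    exists2 W, gam W & forall a, W a -> V (tg_mul (tg_mul x a) (tg_inv x)) }.

Definition action_nbhs_base (G : topGroup) (X : topologicalType)
    (alpha : G -> X -> X) (gam : set (set G)) :=
  forall (y : X) (W : set X), nbhs y W -> exists2 V, gam V &
    exists2 B, nbhs y B & forall v z, V v -> B z -> W (alpha v z).

Section ActionQuotient.
Variables (G : topGroup) (X : topologicalType) (alpha : G -> X -> X).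
Hypotheses (act : cont_action alpha) (X_haus : hausdorff_space X).
Variable gam : set (set G).
Hypotheses (gamB : group_nbhs_base gam) (gamA : action_nbhs_base alpha gam).
Local Notation "x * y" := (tg_mul x y).
Local Notation "x ^-1" := (tg_inv x).
Local Notation "1" := (@tg_one G).

(* G modulo the kernel of alpha; the translates of the members of [gam]
   form its neighbourhood bases. *)
Definition act_quot := {f : X -> X | exists g, f = alpha g}.
HB.instance Definition _ := gen_eqMixin act_quot.
HB.instance Definition _ := gen_choiceMixin act_quot.

Definition to_quot (g : G) : act_quot := exist _ (alpha g) (ex_intro _ g erefl).

Lemma to_quotP (p : act_quot) : exists g, p = to_quot g.
Proof. by case: p => f [g fg]; exists g; apply: eq_exist. Qed.

Lemma to_quot_eq g h : alpha g = alpha h -> to_quot g = to_quot h.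
Proof. exact: eq_exist. Qed.

Definition quot_rep (p : act_quot) : G := projT1 (cid (proj2_sig p)).

Lemma act_quot_rep g : alpha (quot_rep (to_quot g)) = alpha g.
Proof. by rewrite /quot_rep; case: cid => h /= <-. Qed.

Definition qmul (p q : act_quot) := to_quot (quot_rep p * quot_rep q).
Definition qinv (p : act_quot) := to_quot (quot_rep p)^-1.
Definition qone := to_quot 1.

Lemma qmulE g h : qmul (to_quot g) (to_quot h) = to_quot (g * h).
Proof.
by apply: to_quot_eq; apply: funext => x; rewrite !(actM act) !act_quot_rep.
Qed.

Lemma qinvE g : qinv (to_quot g) = to_quot g^-1.
Proof.
apply: to_quot_eq; apply: funext => x.
by rewrite -{1}(actVK act g x) -(act_quot_rep g) (actK act).
Qed.

Lemma qmulA p q r : qmul p (qmul q r) = qmul (qmul p q) r.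
Proof.
have [a ->] := to_quotP p; have [b ->] := to_quotP q; have [c ->] := to_quotP r.
by rewrite !qmulE tg_mulA.
Qed.

Lemma qmul1 p : qmul qone p = p.
Proof. by have [a ->] := to_quotP p; rewrite qmulE tg_mul1g. Qed.

Lemma qmulV p : qmul (qinv p) p = qone.
Proof. by have [a ->] := to_quotP p; rewrite qinvE qmulE tg_mulVg. Qed.

Lemma qmulr1 p : qmul p qone = p.
Proof. by have [a ->] := to_quotP p; rewrite qmulE tg_mulg1. Qed.

Definition qnbhs (p : act_quot) : set_system act_quot :=
  [set U | exists2 V, gam V & forall v, V v -> U (qmul p (to_quot v))].

HB.instance Definition _ := hasNbhs.Build act_quot qnbhs.

Lemma qnbhs_filter (p : act_quot) : ProperFilter (@nbhs _ act_quot p).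
Proof.
split; first by move=> [V /(base_nbhs gamB) /nbhs_singleton V1 /(_ _ V1)].
split.
- by have [V gV] := base_nonempty gamB; exists V.
- move=> A B [V1 g1 A1] [V2 g2 B2].
  have [W gW WV] := base_meet gamB g1 g2; exists W => // v /WV [].
  by split; [exact: A1|exact: B2].
- by move=> A B AB [V gV AV]; exists V => // v /AV /AB.
Qed.

Lemma qnbhs_singleton (p : act_quot) (A : set act_quot) : nbhs p A -> A p.
Proof.
by move=> [V /(base_nbhs gamB) /nbhs_singleton V1 AV]; rewrite -[p]qmulr1; exact: AV.
Qed.

Lemma qnbhs_nbhs (p : act_quot) (A : set act_quot) : nbhs p A -> nbhs p (nbhs^~ A).
Proof.
have [a ->] := to_quotP p; move=> [V gV AV]; have [W gW WWV] := base_half gamB gV.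
exists W => // w Ww; exists W => // w' Ww'.
by rewrite !qmulE -tg_mulA -qmulE; apply: AV; exact: WWV.
Qed.

HB.instance Definition _ := Nbhs_isNbhsTopological.Build act_quot
  qnbhs_filter qnbhs_singleton qnbhs_nbhs.

Definition quot_top : topologicalType := act_quot.

Lemma qmul_cont : continuous (fun pq : quot_top * quot_top => qmul pq.1 pq.2).
Proof.
move=> [p q] U /=; have [a ->] := to_quotP p; have [b ->] := to_quotP q.
rewrite qmulE => -[V gV UV].
have [V' gV' V'V] := base_half gamB gV.
have [W gW WV'] := base_conj gamB b^-1 gV'.
exists ([set qmul (to_quot a) (to_quot w) | w in W],
        [set qmul (to_quot b) (to_quot v) | v in V']).
  by split; [exists W => // w Ww; exists w|exists V' => // v Vv; exists v].
move=> _ /= [[w Ww <-] [v V'v <-]]; rewrite !qmulE.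
have := UV _ (V'V _ _ (WV' _ Ww) V'v); rewrite qmulE.
by rewrite tg_invgK !tg_mulA tg_mulgK.
Qed.

Lemma qinv_cont : continuous (qinv : quot_top -> quot_top).
Proof.
move=> p U /=; have [a ->] := to_quotP p; rewrite qinvE => -[V gV UV].
have [W0 gW0 W0V] := base_conj gamB a gV.
have [W gW WW0] := base_inv gamB gW0.
exists W => // w Ww; rewrite /= qmulE qinvE.
have := UV _ (W0V _ (WW0 _ Ww)); rewrite qmulE.
by rewrite tg_invMg !tg_mulA tg_mulVg tg_mul1g.
Qed.

Lemma quot_hausdorff : hausdorff_space quot_top.
Proof.
move=> p q pq; apply: contrapT => npq.
move: pq npq; have [a ->] := to_quotP p; have [b ->] := to_quotP q => pq nab.
have [y ny] : exists y, alpha a y <> alpha b y.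
  apply: contrapT => h; apply: nab; apply: to_quot_eq; apply: funext => y.
  by apply: contrapT => h'; apply: h; exists y.
have : ~ cluster (nbhs (alpha a y)) (alpha b y) by move/X_haus.
move=> /existsNP [A /existsNP [B /not_implyP [ayA /not_implyP [byB AB]]]].
have [V gV [Z yZ VZAB]] := gamA (filterI (nbhs_act_pt act ayA) (nbhs_act_pt act byB)).
have Zy := nbhs_singleton yZ.
have nbhs_V c : nbhs (to_quot c) [set qmul (to_quot c) (to_quot v) | v in V].
  by exists V => // v Vv; exists v.
have [_ [[v Vv <-] [v' Vv' e]]] := pq _ _ (nbhs_V a) (nbhs_V b).
move: e; rewrite !qmulE => /(congr1 sval) /= e.
apply: AB; exists (alpha (a * v) y); split.
  by rewrite (actM act); exact: (VZAB _ _ Vv Zy).1.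
by rewrite -e (actM act); exact: (VZAB _ _ Vv' Zy).2.
Qed.

Definition quot_group : topGroup :=
  @TopGroup quot_top qmul qinv qone qmulA qmul1 qmulV qmul_cont qinv_cont
    quot_hausdorff.

Definition quot_act (p : quot_group) (x : X) : X := sval p x.

Lemma quot_actE g x : alpha g x = quot_act (to_quot g) x.
Proof. by []. Qed.

Lemma quot_act_cont : cont_action quot_act.
Proof.
split; first by move=> x; rewrite /quot_act /= (act1 act).
split.
  move=> p q x; have [a ->] := to_quotP p; have [b ->] := to_quotP q.
  by rewrite /quot_act /= (actM act) !act_quot_rep.
move=> [p x] W /=; have [a ->] := to_quotP p => /(nbhs_act_pt act).
move=> /gamA [V gV [B xB VBW]].
exists ([set qmul (to_quot a) (to_quot v) | v in V], B).
  by split => //; exists V => // v Vv; exists v.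
move=> [_ z] [/= [v Vv <-] Bz]; rewrite /quot_act /= (actM act) !act_quot_rep.
exact: VBW.
Qed.

Lemma to_quot_epi : epimorphism (to_quot : G -> quot_group).
Proof.
split; first by move=> g h; rewrite /= qmulE.
split; last by move=> p; have [g ->] := to_quotP p; exists g.
move=> g U /= [V /(base_nbhs gamB) /(nbhs1_ltrans g) gV UV].
by apply: filterS gV => z /UV; rewrite qmulE tg_mulVKg.
Qed.

Lemma quot_character (K : Type) : card_le_tau K gam -> character_le K quot_group.
Proof.
move=> gamK p.
exists ((fun V => [set qmul p (to_quot v) | v in V]) @` gam); split; [|split].
- exact: card_le_trans (card_image_le _ _) gamK.
- by move=> _ [V gV <-]; exists V => // v Vv; exists v.
- move=> U [V gV UV]; exists [set qmul p (to_quot v) | v in V]; first by exists V.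
  by move=> _ [v Vv <-]; exact: UV.
Qed.

End ActionQuotient.

Section BalancedBase.
Variables (K : Type) (G : topGroup).
Hypotheses (K_infinite : infinite_set [set: K]) (G_bal : tau_balanced K G).
Local Notation "x * y" := (tg_mul x y).
Local Notation "x ^-1" := (tg_inv x).
Local Notation "1" := (@tg_one G).

Lemma nbhs1_half_fun : exists half : set G -> set G, forall V, nbhs 1 V ->
  nbhs 1 (half V) /\ forall a b, half V a -> half V b -> V (a * b).
Proof.
have /choice [half halfP] (V : set G) : exists W, nbhs 1 V ->
    nbhs 1 W /\ forall a b, W a -> W b -> V (a * b).
  have [/nbhs1_half [W W1 WWV]|nV] := pselect (nbhs 1 V); first by exists W.
  by exists setT => /nV.
by exists half.
Qed.

Lemma balanced_conj_fun : exists bal : set G -> K -> set G, forall V, nbhs 1 V ->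
  (forall k, nbhs 1 (bal V k)) /\
  forall x, exists k, forall v, bal V k v -> V (x * v * x^-1).
Proof.
have /choice [bal balP] (V : set G) : exists e : K -> set G, nbhs 1 V ->
    (forall k, nbhs 1 (e k)) /\
    forall x, exists k, forall v, e k v -> V (x * v * x^-1).
  have [V1|nV] := pselect (nbhs 1 V); last by exists (fun=> setT) => /nV.
  have [gam [gamK [gam1 gamV]]] := G_bal V1.
  have [e eE] := card_le_enum (let: ex_intro2 W gW _ := gamV 1 in ex_intro _ W gW) gamK.
  exists e => _; split=> [k|x]; first by apply: gam1; rewrite eE; exists k.
  by have [W] := gamV x; rewrite eE => -[k _ <-]; exists k.
by exists bal.
Qed.

Lemma balanced_nbhs_base (b : K -> set G) : (forall k, nbhs 1 (b k)) ->
  exists gam, [/\ group_nbhs_base gam, card_le_tau K gam & range b `<=` gam].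
Proof.
move=> b1; have [k0 _] := infinite_setN0 K_infinite.
have [half halfP] := nbhs1_half_fun; have [bal balP] := balanced_conj_fun.
pose op V1 V2 k := half V1 `&` V2 `&` bal V1 k `&` [set a | V1 a^-1].
have op1 V1 V2 k : nbhs 1 V1 -> nbhs 1 V2 -> nbhs 1 (op V1 V2 k).
  move=> V1_1 V2_1; apply: filterI; last exact: nbhs1_inv.
  apply: filterI; last exact: (balP _ V1_1).1.
  by apply: filterI; first exact: (halfP _ V1_1).1.
have half_sub V : nbhs 1 V -> half V `<=` V.
  move=> V_1 a ha; rewrite -[a]tg_mulg1; apply: (halfP _ V_1).2 => //.
  exact: nbhs_singleton (halfP _ V_1).1.
have [s [bs s_op s_min]] := closure_indexed K_infinite b op.
have s1 : range s `<=` nbhs 1.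
  by apply: s_min => [_ [k _ <-]|V1 V2 k]; [exact: b1|exact: op1].
have op_s V1 V2 k : range s V1 -> range s V2 -> range s (op V1 V2 k) by exact: s_op.
exists (range s); split=> //; last exact: (@card_le_range _ _ (range s) s).
split=> //.
- by exists (b k0); apply: bs; exists k0.
- move=> V1 V2 sV1 sV2; exists (op V1 V2 k0); first exact: op_s.
  by move=> a [[[/(half_sub _ (s1 _ sV1)) ? ?] _] _].
- move=> V sV; exists (op V V k0); first exact: op_s.
  by move=> a c [[[ha _] _] _] [[[hc _] _] _]; exact: (halfP _ (s1 _ sV)).2.
- by move=> V sV; exists (op V V k0); [exact: op_s|move=> a [_]].
- move=> V x sV; have [k conjk] := (balP _ (s1 _ sV)).2 x.
  by exists (op V V k); [exact: op_s|move=> a [[_ /conjk]]].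
Qed.

End BalancedBase.

Section LocalFamily.
Variables (K : Type) (G : topGroup) (X : topologicalType) (alpha : G -> X -> X).
Hypotheses (act : cont_action alpha) (trans : transitive_action alpha).
Hypothesis chiX : character_le K X.
Local Notation "x * y" := (tg_mul x y).
Local Notation "x ^-1" := (tg_inv x).
Local Notation "1" := (@tg_one G).

Lemma action_nbhs_family : exists b : K -> set G, (forall k, nbhs 1 (b k)) /\
  forall gam, group_nbhs_base gam -> range b `<=` gam -> action_nbhs_base alpha gam.
Proof.
have [[x0 _]|X0] := pselect (exists x : X, True); last first.
  by exists (fun=> setT); split=> [k|gam _ _ y]; [exact: filterT|case: X0; exists y].
have [B [BK [Bx0 Bbase]]] := chiX x0.
have [e eE] := card_le_enum (let: ex_intro2 V BV _ := Bbase setT filterT in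
  ex_intro _ V BV) BK.
have /choice [UZ UZe] k : exists UZ : set G * set X, [/\ nbhs 1 UZ.1, nbhs x0 UZ.2 &
    forall h z, UZ.1 h -> UZ.2 z -> e k (alpha h z)].
  have : nbhs (alpha 1 x0) (e k).
    by rewrite (act1 act); apply: Bx0; rewrite eE; exists k.
  by move=> /(nbhs_act act) [U U1 [Z x0Z UZek]]; exists (U, Z).
exists (fun k => (UZ k).1); split=> [k|gam gamB bgam y W yW]; first by case: (UZe k).
have [a ax0] := trans x0 y; move: yW; rewrite -ax0 => /(nbhs_act_pt act).
move=> /Bbase [V]; rewrite eE => -[k _ <-] ekW.
have [U1 Zx0 UZek] := UZe k.
have [V' gV' V'U] := base_conj gamB a^-1 (bgam _ (ex_intro2 _ _ k I erefl)).
exists V' => //; exists [set z | (UZ k).2 (alpha a^-1 z)].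
  by apply: (nbhs_act_pt act); rewrite (actK act).
move=> v z /V'U V'v Zz.
have -> : alpha v z = alpha a (alpha (a^-1 * v * a^-1^-1) (alpha a^-1 z)).
  by rewrite -!(actM act) tg_invgK !tg_mulA tg_mulgK tg_mulgV tg_mul1g.
exact/ekW/UZek.
Qed.

End LocalFamily.

Lemma epimorphism1 (G H : topGroup) (ph : G -> H) :
  (forall g h, ph (tg_mul g h) = tg_mul (ph g) (ph h)) -> ph tg_one = tg_one.
Proof.
by move=> phM; apply: (@tg_mulIg _ (ph tg_one)); rewrite -phM !tg_mul1g tg_mulg1.
Qed.

Lemma epimorphism_nbhs1 (G H : topGroup) (ph : G -> H) (U : set H) :
  epimorphism ph -> nbhs tg_one U -> nbhs tg_one (ph @^-1` U).
Proof. by move=> [phM [ph_cont _]] U1; apply: ph_cont; rewrite epimorphism1. Qed.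

Section EquivariantImage.
Variables (G H : topGroup) (X : topologicalType).
Variables (alpha : G -> X -> X) (gm : H -> X -> X) (ph : G -> H).
Hypothesis equiv : forall g x, alpha g x = gm (ph g) x.

Lemma transitive_image : transitive_action alpha -> transitive_action gm.
Proof. by move=> tr x y; have [g <-] := tr x y; exists (ph g); rewrite equiv. Qed.

Lemma d_open_image : epimorphism ph -> d_open_action alpha -> d_open_action gm.
Proof.
move=> epi dO x O /(epimorphism_nbhs1 epi) /(dO x); apply: filterS.
by apply: closureS => _ [g Og <-]; exists (ph g) => //; rewrite equiv.
Qed.

End EquivariantImage.

Lemma balanced_reduction (K : Type) (G : topGroup) (X : topologicalType)
    (alpha : G -> X -> X) :
  infinite_set [set: K] -> hausdorff_space X -> character_le K X ->
  tau_balanced K G -> cont_action alpha -> transitive_action alpha ->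
  d_open_action alpha ->
  exists (H : topGroup) (gm : H -> X -> X) (ph : G -> H),
    cont_action gm /\ transitive_action gm /\ d_open_action gm /\
    character_le K H /\ epimorphism ph /\
    (forall g x, alpha g x = gm (ph g) x).
Proof.
move=> K_inf X_haus chiX G_bal act tr dO.
have [b [b1 b_act]] := action_nbhs_family act tr chiX.
have [gam [gamB gamK bgam]] := balanced_nbhs_base K_inf G_bal b1.
have gamA := b_act _ gamB bgam.
pose H := quot_group act X_haus gamB gamA.
pose gm : H -> X -> X := fun p => quot_act p.
pose ph : G -> H := to_quot alpha.
have equiv : forall g x, alpha g x = gm (ph g) x := quot_actE act X_haus gamB gamA.
have epi : epimorphism ph := to_quot_epi act X_haus gamB gamA.
exists H, gm, ph.
split; first exact: quot_act_cont.
split; first exact: transitive_image equiv tr.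
split; first exact: d_open_image equiv epi dO.
by split; first exact: quot_character.
Qed.

(** * Narrow groups and weight *)

Section Tychonoff.
Variable X : topologicalType.
Hypothesis X_tych : tychonoff_space X.
Local Open Scope ring_scope.

Lemma tychonoff_regular (y : X) (W : set X) :
  nbhs y W -> exists2 W', nbhs y W' & closure W' `<=` W.
Proof.
move=> yW; have [B [oB By] BW] : exists2 B, open_nbhs y B & B `<=` W.
  by move: yW; rewrite nbhsE.
have [f [f_cont [fy f1]]] := X_tych.2 _ _ (open_closedC oB) (fun nBy => nBy By).
have f_nbhs z (I : set Rdefinitions.R) : open I -> I (f z) -> nbhs z (f @^-1` I).
  by move=> oI Ifz; apply: f_cont; exact: open_nbhs_nbhs.
exists (f @^-1` [set r | r < 1/2]).
  by apply: f_nbhs; [exact: open_lt|rewrite /= fy; lra].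
move=> z cz; apply: contrapT => nWz.
have /cz [w [/= w1 w2]] : nbhs z (f @^-1` [set r | 1/2 < r]).
  by apply: f_nbhs; [exact: open_gt|rewrite /= f1 //; [lra|move=> /BW]].
lra.
Qed.

Lemma tychonoff_hausdorff : hausdorff_space X.
Proof.
move=> p q cpq; apply: contrapT => npq.
have [W' pW' cW'] : exists2 W', nbhs p W' & closure W' `<=` ~` [set q].
  apply: tychonoff_regular; apply: open_nbhs_nbhs; split=> //.
  by rewrite openC; exact: X_tych.1.
by apply: (cW' q) => // B qB; exact: cpq.
Qed.

End Tychonoff.

Section Narrow.
Variable K : Type.

Lemma nbhs1_conj_small (G : topGroup) (U : set G) : nbhs tg_one U ->
  exists2 V, nbhs tg_one V & forall v1 v2 v3, V v1 -> V v2 -> V v3 ->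
    U (tg_mul (tg_mul v1 v2) (tg_inv v3)).
Proof.
move=> /nbhs1_half [U1 /[dup] U1_1 /nbhs1_half [U2 U2_1 U2U1] U1U].
exists (U2 `&` [set a | U1 (tg_inv a)]); first exact: filterI U2_1 (nbhs1_inv U1_1).
by move=> v1 v2 v3 [? _] [? _] [_ ?]; apply: U1U => //; exact: U2U1.
Qed.

Lemma narrow_balanced (G : topGroup) : tau_narrow K G -> tau_balanced K G.
Proof.
move=> G_narrow U /nbhs1_conj_small [V V1 VU].
have [A [AK AV]] := G_narrow _ (nbhs1_inv V1).
pose W a := [set w | V (tg_mul (tg_mul (tg_inv a) w) a)].
exists (W @` A); split; first exact: card_le_trans (card_image_le _ _) AK.
split=> [_ [a _ <-]|x].
  have : nbhs (tg_mul (tg_mul (tg_inv a) tg_one) a) V by rewrite tg_mulg1 tg_mulVg.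
  by move=> /nbhs_rmul /nbhs_lmul.
have [a [u [Aa [Vu xE]]]] := AV (tg_inv x).
exists (W a); first by exists a.
move=> w Ww; have := VU _ _ _ Vu Ww Vu.
by rewrite -[x]tg_invgK xE !(tg_invMg, tg_invgK, tg_mulA).
Qed.

Lemma narrow_epimorphism (G H : topGroup) (ph : G -> H) :
  tau_narrow K G -> epimorphism ph -> tau_narrow K H.
Proof.
move=> G_narrow epi U /(epimorphism_nbhs1 epi) /G_narrow [A [AK AU]].
have [phM [_ ph_surj]] := epi.
exists (ph @` A); split; first exact: card_le_trans (card_image_le _ _) AK.
move=> k; have [g <-] := ph_surj k; have [a [u [Aa [Uu ->]]]] := AU g.
by exists (ph a), (ph u); split; [exists a|split; last exact: phM].
Qed.

Hypothesis K_infinite : infinite_set [set: K].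

Lemma narrow_character_weight (H : topGroup) :
  tau_narrow K H -> character_le K H -> weight_le K H.
Proof.
move=> H_narrow /(_ tg_one) [B [BK [B1 Bbase]]].
have [e eE] := card_le_enum (let: ex_intro2 V BV _ := Bbase setT filterT in
  ex_intro _ V BV) BK.
have Be k : B (e k) by rewrite eE; exists k.
have /choice [A AP] k : exists A : K -> H, forall h, exists a u,
    [/\ range A a, (e k)° u & h = tg_mul a u].
  have [A' [A'K A'P]] := H_narrow _ (nbhs_interior (B1 _ (Be k))).
  have [a0 [u0 [A'a0 _]]] := A'P tg_one.
  have [s sE] := card_le_enum (ex_intro _ a0 A'a0) A'K.
  exists s => h; have [a [u [A'a [Uu hE]]]] := A'P h.
  by exists a, u; split; rewrite // -sE.
pose base (kk : K * K) := [set z | (e kk.1)° (tg_mul (tg_inv (A kk.1 kk.2)) z)].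
exists (range base); split; [|split].
- exact: card_le_trans (card_le_range (@subset_refl _ (range base)))
    (card_le_prod_self K_infinite).
- by move=> _ [kk _ <-]; apply: open_ltrans; exact: open_interior.
move=> U h oU Uh.
have [N N1 [N' N'1 NN'U]] : exists2 N, nbhs tg_one N & exists2 N', nbhs tg_one N' &
    forall a c, N a -> N' c -> U (tg_mul h (tg_mul a c)).
  apply: (@nbhs_mul _ _ _ [set b | U (tg_mul h b)]); rewrite tg_mulg1.
  by apply: nbhs_lmul; rewrite tg_mulg1; exact: open_nbhs_nbhs.
have [W BW WN] := Bbase _ (filterI (nbhs1_inv N1) N'1).
have [k1 _ ek1] : range e W by rewrite -eE.
have [a [u [[k2 _ Ak2] Wu hE]]] := AP k1 h.
exists (base (k1, k2)); first by exists (k1, k2).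
rewrite /base /= Ak2; split; first by rewrite hE tg_mulKg.
move=> z /interior_subset; rewrite ek1 => Wz.
have [Nu _] : [set a | N (tg_inv a)] u /\ N' u.
  by apply: WN; rewrite -ek1; exact: interior_subset Wu.
have := NN'U _ _ Nu (WN _ Wz).2.
by rewrite hE -tg_mulA tg_mulVKg tg_mulVKg.
Qed.


End Narrow.

Lemma weight_of_d_open_action (K : Type) (H : topGroup) (X : topologicalType)
    (gm : H -> X -> X) :
  tychonoff_space X -> cont_action gm -> transitive_action gm ->
  d_open_action gm -> weight_le K H -> weight_le K X.
Proof.
move=> X_tych act tr dO [BH [BHK [BH_open BH_base]]].
have [[x0 _]|X0] := pselect (exists x : X, True); last first.
  exists set0; split; first exact: card_ge0.
  by split=> // U x; case: X0; exists x.
pose orbit_int V := (closure ((fun h => gm h x0) @` V))°.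
exists (orbit_int @` BH); split; [|split].
- exact: card_le_trans (card_image_le _ _) BHK.
- by move=> _ [V _ <-]; exact: open_interior.
move=> U y oU Uy.
have [W' yW' cW'U] := tychonoff_regular X_tych (open_nbhs_nbhs (conj oU Uy)).
have [c cx0] := tr x0 y.
have cW' : nbhs c [set h | W' (gm h x0)] by apply: (nbhs_act_orbit act); rewrite cx0.
have [V BV [Vc VW']] := BH_base _ c (@open_interior _ _) cW'.
exists (orbit_int V); first by exists V.
split=> [|z /interior_subset orbVz].
  have Vc1 : nbhs tg_one [set h | V (tg_mul h c)].
    apply: nbhs_rmul; rewrite tg_mul1g; apply: open_nbhs_nbhs.
    by split => //; exact: BH_open.
  apply: interiorS (dO y _ Vc1); apply: closureS => _ [h Vhc <-].
  by exists (tg_mul h c) => //; rewrite (actM act) cx0.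
apply: cW'U; apply: (closureS _ orbVz) => _ [h /VW' /interior_subset W'h <-].
exact: W'h.
Qed.

Lemma narrow_reduction (K : Type) (G : topGroup) (X : topologicalType)
    (alpha : G -> X -> X) :
  infinite_set [set: K] -> tychonoff_space X -> character_le K X ->
  tau_narrow K G -> cont_action alpha -> transitive_action alpha ->
  d_open_action alpha ->
  exists (H : topGroup) (gm : H -> X -> X) (ph : G -> H),
    cont_action gm /\ transitive_action gm /\ d_open_action gm /\
    weight_le K H /\ weight_le K X /\ epimorphism ph /\
    (forall g x, alpha g x = gm (ph g) x).
Proof.
move=> K_inf X_tych chiX G_narrow act tr dO.
have [H [gm [ph [gact [gtr [gdO [chiH [epi equiv]]]]]]]] :=
  balanced_reduction K_inf (tychonoff_hausdorff X_tych) chiX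
    (narrow_balanced G_narrow) act tr dO.
have wH := narrow_character_weight K_inf (narrow_epimorphism G_narrow epi) chiH.
exists H, gm, ph; do 3 split => //; split => //.
by split; first exact: weight_of_d_open_action X_tych gact gtr gdO wH.
Qed.

(** * Coset spaces *)

Section CosetSpace.
Variables (G : topGroup) (X : topologicalType) (piG : G -> X).
Hypothesis cs : coset_space_via piG.
Local Notation "x * y" := (tg_mul x y).
Local Notation "x ^-1" := (tg_inv x).

Lemma coset_surj y : exists g, piG g = y.
Proof. by case: cs => S [_ [_ [piG_surj _]]]. Qed.

Lemma coset_compat g h c : piG g = piG h -> piG (c * g) = piG (c * h).
Proof.
case: cs => S [_ [_ [_ [piG_fib _]]]] /piG_fib gh; apply/piG_fib.
by rewrite tg_invMg -tg_mulA tg_mulKg.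
Qed.

Lemma coset_quotient (U : set X) : open U <-> open (piG @^-1` U).
Proof. by case: cs => S [_ [_ [_ [_]]]]. Qed.

Lemma coset_cont : continuous piG.
Proof.
move=> g W gW; have [B [oB gB] BW] : exists2 B, open_nbhs (piG g) B & B `<=` W.
  by move: gW; rewrite nbhsE.
apply: (@filterS _ _ _ (piG @^-1` B)); first by move=> h /BW.
by apply: open_nbhs_nbhs; split => //; exact/coset_quotient.
Qed.

Lemma coset_open (O : set G) : open O -> open (piG @` O).
Proof.
case: cs => S [_ [_ [_ [piG_fib _]]]] oO; apply/coset_quotient.
rewrite openE => z [w Ow /piG_fib Swz].
have zw : z * (w^-1 * z)^-1 = w by rewrite tg_invMg tg_invgK tg_mulVKg.
have : nbhs (z * (w^-1 * z)^-1) O by rewrite zw; move: oO; rewrite openE; exact.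
move=> /nbhs_rmul; apply: filterS => v Ov; exists (v * (w^-1 * z)^-1) => //.
by apply/piG_fib; rewrite tg_invMg tg_invgK -tg_mulA tg_mulVg tg_mulg1.
Qed.

Definition coset_rep (y : X) : G := projT1 (cid (coset_surj y)).

Lemma coset_repK y : piG (coset_rep y) = y.
Proof. by rewrite /coset_rep; case: cid. Qed.

Definition coset_act (g : G) (x : X) : X := piG (g * coset_rep x).

Lemma coset_actE g h : coset_act g (piG h) = piG (g * h).
Proof. by apply: coset_compat; exact: coset_repK. Qed.

Lemma coset_act_cont : cont_action coset_act.
Proof.
split; first by move=> x; rewrite /coset_act tg_mul1g coset_repK.
split; first by move=> g h x; rewrite [coset_act h x]/coset_act coset_actE tg_mulA.
move=> [g x] W /= /coset_cont /nbhs_mul [U gU [V xV UVW]].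
exists (U, piG @` V°).
  split=> //; apply: open_nbhs_nbhs; split; first exact/coset_open/open_interior.
  by exists (coset_rep x); [exact: xV|exact: coset_repK].
by move=> [h _] [/= Uh [v /interior_subset Vv <-]]; rewrite coset_actE; exact: UVW.
Qed.

Lemma coset_act_transitive : transitive_action coset_act.
Proof.
move=> x y; exists (coset_rep y * (coset_rep x)^-1).
by rewrite /coset_act tg_mulgVK coset_repK.
Qed.

Lemma coset_act_d_open : d_open_action coset_act.
Proof.
move=> x O O1; set T := [set z | O° (z * (coset_rep x)^-1)].
have : nbhs x (piG @` T).
  apply: open_nbhs_nbhs; split; first exact/coset_open/open_rtrans/open_interior.
  by exists (coset_rep x); [rewrite /T /= tg_mulgV; exact: O1|exact: coset_repK].
apply: filterS => _ [z Tz <-]; apply: subset_closure.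
by exists (z * (coset_rep x)^-1); [exact: interior_subset|rewrite /coset_act tg_mulgVK].
Qed.

End CosetSpace.

Section CosetTransfer.
Variables (G H : topGroup) (X : topologicalType) (piG : G -> X).
Variables (gm : H -> X -> X) (ph : G -> H).
Hypotheses (X_T1 : forall x : X, closed [set x]) (cs : coset_space_via piG).
Hypotheses (gact : cont_action gm) (epi : epimorphism ph).
Hypothesis gmE : forall g h, gm (ph g) (piG h) = piG (tg_mul g h).

Lemma coset_space_transfer : exists piH : H -> X, coset_space_via piH /\
  forall g h h', piG h = piH h' -> piG (tg_mul g h) = piH (tg_mul (ph g) h').
Proof.
pose x0 := piG tg_one; pose piH h := gm h x0.
have piH_ph g : piH (ph g) = piG g by rewrite /piH gmE tg_mulg1.
exists piH; split; last by move=> g h h' hh'; rewrite -gmE hh' /piH (actM gact).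
exists [set h | gm h x0 = x0]; split; [split|split].
- exact: act1.
- by move=> a c /= ax0 cx0; rewrite (actM gact) -{1}cx0 (actK gact).
- exact ((continuous_closedP piH).1 (orbit_cont (x := x0) gact) _ (@X_T1 x0)).
split; first by move=> y; have [g <-] := coset_surj cs y; exists (ph g).
split=> [a c|U]; first rewrite /piH /= (actM gact).
  by split=> [<-|ac]; [rewrite (actK gact)|rewrite -{1}ac (actVK gact)].
split=> [oU|oHU]; first by apply: open_comp => // h _; exact: orbit_cont.
apply/(coset_quotient cs).
have -> : piG @^-1` U = ph @^-1` (piH @^-1` U).
  by apply/seteqP; split=> g /=; rewrite piH_ph.
by have [_ [ph_cont _]] := epi; apply: open_comp => // g _; exact: ph_cont.
Qed.

End CosetTransfer.

Lemma coset_balanced_reduction (K : Type) (G : topGroup) (X : topologicalType)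
    (piG : G -> X) :
  infinite_set [set: K] -> tychonoff_space X -> character_le K X ->
  tau_balanced K G -> coset_space_via piG ->
  exists (H : topGroup) (piH : H -> X) (ph : G -> H),
    coset_space_via piH /\ character_le K H /\ epimorphism ph /\
    (forall g h h', piG h = piH h' -> piG (tg_mul g h) = piH (tg_mul (ph g) h')).
Proof.
move=> K_inf X_tych chiX G_bal cs.
have [H [gm [ph [gact [_ [_ [chiH [epi equiv]]]]]]]] :=
  balanced_reduction K_inf (tychonoff_hausdorff X_tych) chiX G_bal
    (coset_act_cont cs) (coset_act_transitive cs) (coset_act_d_open cs).
have gmE g h : gm (ph g) (piG h) = piG (tg_mul g h) by rewrite -equiv coset_actE.
have [piH [csH piHE]] := coset_space_transfer X_tych.1 cs gact epi gmE.
by exists H, piH, ph.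
Qed.

Lemma coset_narrow_reduction (K : Type) (G : topGroup) (X : topologicalType)
    (piG : G -> X) :
  infinite_set [set: K] -> tychonoff_space X -> character_le K X ->
  tau_narrow K G -> coset_space_via piG ->
  exists (H : topGroup) (piH : H -> X) (ph : G -> H),
    coset_space_via piH /\ weight_le K H /\ weight_le K X /\ epimorphism ph /\
    (forall g h h', piG h = piH h' -> piG (tg_mul g h) = piH (tg_mul (ph g) h')).
Proof.
move=> K_inf X_tych chiX G_narrow cs.
have [H [gm [ph [gact [_ [_ [wH [wX [epi equiv]]]]]]]]] :=
  narrow_reduction K_inf X_tych chiX G_narrow
    (coset_act_cont cs) (coset_act_transitive cs) (coset_act_d_open cs).
have gmE g h : gm (ph g) (piG h) = piG (tg_mul g h) by rewrite -equiv coset_actE.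
have [piH [csH piHE]] := coset_space_transfer X_tych.1 cs gact epi gmE.
by exists H, piH, ph.
Qed.

Theorem corollary3p7 (K : Type) (X : topologicalType) :
  infinite_set [set: K] -> tychonoff_space X -> character_le K X ->
  (* (a), coset space version *)
  (forall (G : topGroup) (piG : G -> X),
     tau_balanced K G -> coset_space_via piG ->
     exists (H : topGroup) (piH : H -> X) (phi : G -> H),
       coset_space_via piH /\ character_le K H /\ epimorphism phi /\
       (forall (g h : G) (h' : H), piG h = piH h' ->
          piG (tg_mul g h) = piH (tg_mul (phi g) h'))) /\
  (* (a), action version *)
  (forall (G : topGroup) (alpha : G -> X -> X),
     tau_balanced K G -> cont_action alpha -> transitive_action alpha ->
     d_open_action alpha ->
     exists (H : topGroup) (gam : H -> X -> X) (phi : G -> H),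
       cont_action gam /\ transitive_action gam /\ d_open_action gam /\
       character_le K H /\ epimorphism phi /\
       (forall (g : G) (x : X), alpha g x = gam (phi g) x)) /\
  (* (b), coset space version *)
  (forall (G : topGroup) (piG : G -> X),
     tau_narrow K G -> coset_space_via piG ->
     exists (H : topGroup) (piH : H -> X) (phi : G -> H),
       coset_space_via piH /\ weight_le K H /\ weight_le K X /\
       epimorphism phi /\
       (forall (g h : G) (h' : H), piG h = piH h' ->
          piG (tg_mul g h) = piH (tg_mul (phi g) h'))) /\
  (* (b), action version *)
  (forall (G : topGroup) (alpha : G -> X -> X),
     tau_narrow K G -> cont_action alpha -> transitive_action alpha ->
     d_open_action alpha ->
     exists (H : topGroup) (gam : H -> X -> X) (phi : G -> H),
       cont_action gam /\ transitive_action gam /\ d_open_action gam /\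
       weight_le K H /\ weight_le K X /\ epimorphism phi /\
       (forall (g : G) (x : X), alpha g x = gam (phi g) x)).
Proof.
move=> K_inf X_tych chiX; split; [|split; [|split]].
- by move=> G piG; exact: coset_balanced_reduction.
- by move=> G alpha; exact: balanced_reduction (tychonoff_hausdorff X_tych) chiX.
- by move=> G piG; exact: coset_narrow_reduction.
- by move=> G alpha; exact: narrow_reduction.
Qed.
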